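(* Let $m\ge 2$ be an integer and let $T^{(1)}\neq T^{(2)}$ be two fixed binary strings of length $m$, each satisfying the non-self-overlap condition $T^{(s)}_{[1+k,m]}\neq T^{(s)}_{[1,m-k]}$ for all $k=1,\dots,m-1$. For an integer $M\ge m$, let $B$ be a random string uniformly distributed on $\{0,1\}^M$, and for $s=1,2$ let $$c^{(s)}=\#\left\{k\in\{1,\dots,M-m+1\}\ :\ B_{[k,k+m-1]}=T^{(s)}\right\}.$$ Put $\mu=\frac{M-m+1}{2^m}$ and $\sigma^2=M\left(\frac{1}{2^m}-\frac{2m-1}{2^{2m}}\right)$. For $k\in\{-(m-1),\dots,-1\}\cup\{1,\dots,m-1\}$ define $e_k=1$ if either $1\le k\le m-1$ and $T^{(1)}_{[1,m-k]}=T^{(2)}_{[1+k,m]}$, or $-m+1\le k\le -1$ and $T^{(1)}_{[1-k,m]}=T^{(2)}_{[1,m+k]}$; and $e_k=0$ otherwise. Then, with $m$, $T^{(1)}$, $T^{(2)}$ fixed, as $M\to\infty$, $$\mathbb{E}\left[\frac{c^{(1)}-\mu}{\sigma}\cdot\frac{c^{(2)}-\mu}{\sigma}\right]=\frac{-2m+1+\sum_{k=1}^{m-1}2^{m-k}\,(e_k+e_{-k})}{2^m-2m+1}+O\!\left(\frac{1}{M}\right).$$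
   Context: For a binary string $X$, $X_{[s,t]}$ denotes the substring of length $t-s+1$ consisting of the $s$-th through $t$-th bits of $X$. The quantity $c^{(s)}$ is the count of occurrences of the template $T^{(s)}$ in one block used in the NIST Non-overlapping Template Matching Test. *)

From HB Require Import structures.
From mathcomp Require Import all_boot all_order all_algebra.
Set Implicit Arguments. Unset Strict Implicit. Unset Printing Implicit Defensive.
Import Order.TTheory GRing.Theory Num.Theory.

(* Binary strings are bitseq; positions are 1-based as in the paper. *)
(* substr X s t = X_[s,t] : the bits s..t of X (length t - s + 1). *)
Definition substr (X : bitseq) (s t : nat) : bitseq :=
  take (t.+1 - s) (drop s.-1 X).

Definition non_self_overlapping (m : nat) (T : bitseq) : Prop :=
  forall k, 1 <= k <= m.-1 -> substr T k.+1 m != substr T 1 (m - k).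

Definition occ (M m : nat) (T : bitseq) (B : M.-tuple bool) : nat :=
  count (fun k => substr B k (k + m - 1) == T) (iota 1 (M - m + 1)).

Definition unifE (R : numFieldType) (M : nat) (f : M.-tuple bool -> R) : R :=
  (\sum_(B : M.-tuple bool) f B) / (2 ^+ M).

Definition muNTM (R : numFieldType) (M m : nat) : R :=
  (M - m + 1)%:R / 2 ^+ m.

Definition sigma2NTM (R : numFieldType) (M m : nat) : R :=
  M%:R * (1 / 2 ^+ m - (2 * m - 1)%:R / 2 ^+ (2 * m)).

Definition ecoef (m : nat) (T1 T2 : bitseq) (k : int) : nat :=
  match k with
  | Posz n => ((1 <= n <= m.-1) && (substr T1 1 (m - n) == substr T2 n.+1 m) : nat)
  | Negz n => (* k = -(n+1) *)
      ((n.+1 <= m.-1) && (substr T1 n.+2 m == substr T2 1 (m - n.+1)) : nat)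
  end.

From HB Require Import structures.
From mathcomp Require Import all_boot all_order all_algebra.
From mathcomp Require Import zify ring lra.
Import Order.TTheory GRing.Theory Num.Theory.
Local Open Scope ring_scope.

(* Write c(s) - mu as the sum, over the N = M - m + 1 window positions j, of
   the centred indicators 1[B_[j+1, j+m] = T(s)] - 2^-m.  The expectation of
   the product of two such indicators, at positions j and j + d, depends only
   on the offset d: windows with d >= m are disjoint, hence independent, and
   for d < m both templates occur with probability 2^-(m+d) if they agree on
   the overlap and 0 otherwise (for d = 0 this uses T(1) <> T(2)).  Summing
   this Toeplitz kernel over all pairs of positions gives N times the
   stated limit times sigma^2 / M, up to a correction bounded independently
   of M, whence the O(1/M) error. *)

Lemma prodr_indicator (R : pzSemiRingType) (T : Type) (P : pred T) (s : seq T) :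
  \prod_(x <- s) (P x)%:R = (all P s)%:R :> R.
Proof.
elim: s => [|x s IH]; first by rewrite big_nil.
by rewrite big_cons IH /=; case: (P x); rewrite ?mul1r ?mul0r.
Qed.

Lemma prodr_if_count (R : pzSemiRingType) (T : Type) (P : pred T) (s : seq T) (a : R) :
  \prod_(x <- s) (if P x then a else 1) = a ^+ count P s.
Proof.
elim: s => [|x s IH]; first by rewrite big_nil expr0.
by rewrite big_cons IH /=; case: (P x); rewrite ?mul1r ?add0n // exprS.
Qed.

Lemma count_iota_interval a b M :
  count (fun i => (a <= i < b)%N) (iota 0 M) = (minn b M - a)%N.
Proof.
elim: M => [|M IH]; first by rewrite /= minn0.
rewrite -addn1 iotaD count_cat IH /= add0n.
case: (leqP a M) => h1; case: (ltnP M b) => h2 /=; lia.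
Qed.

Lemma sum_tuple_prod (R : comPzSemiRingType) (M : nat) (F : nat -> bool -> R) :
  \sum_(B : M.-tuple bool) \prod_(0 <= i < M) F i (nth false B i)
  = \prod_(0 <= i < M) \sum_(b : bool) F i b.
Proof.
rewrite big_mkord bigA_distr_bigA.
rewrite (reindex (fun B : M.-tuple bool => [ffun i : 'I_M => tnth B i])) /=.
  apply: eq_bigr => B _; rewrite big_mkord; apply: eq_bigr => i _.
  by rewrite ffunE (tnth_nth false).
exists (fun f : {ffun 'I_M -> bool} => [tuple f i | i < M]) => x _.
  by apply: eq_from_tnth => i; rewrite tnth_mktuple ffunE.
by apply/ffunP => i; rewrite ffunE tnth_mktuple.
Qed.

Lemma sum_rev_shift (V : nmodType) N (g : nat -> V) :
  \sum_(0 <= j < N) g (N - j)%N = \sum_(1 <= d < N.+1) g d.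
Proof.
rewrite big_nat_rev big_add1 /=; apply: eq_big_nat => j /andP[_ hj].
by congr g; lia.
Qed.

(* Bordering the N x N grid with row and column N adds g 0, g 1..g N and h 1..h N. *)
Lemma sum_toeplitz (V : nmodType) N (g h : nat -> V) :
  \sum_(0 <= j < N) \sum_(0 <= k < N) (if (j <= k)%N then g (k - j)%N else h (j - k)%N)
  = g 0%N *+ N + \sum_(1 <= d < N) (g d + h d) *+ (N - d).
Proof.
elim: N => [|N IH]; first by rewrite !big_geq // mulr0n addr0.
rewrite big_nat_recr //= big_nat_recr //= leqnn subnn.
under eq_big_nat => j /andP[_ hj] do rewrite big_nat_recr //= (ltnW hj).
rewrite big_split /= IH (sum_rev_shift _ _ g).
under eq_big_nat => k /andP[_ hk] do rewrite leqNgt hk /=.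
rewrite (sum_rev_shift _ _ h).
under [in RHS]eq_big_nat => d /andP[_ hd] do rewrite subSn // mulrSr.
rewrite !big_split /=.
have -> : \sum_(1 <= d < N.+1) (g d + h d) *+ (N - d)
          = \sum_(1 <= d < N) (g d + h d) *+ (N - d).
  case: N {IH} => [|N]; first by rewrite !big_geq.
  by rewrite big_nat_recr //= subnn mulr0n addr0.
by rewrite mulrSr -!addrA; congr (_ + _); rewrite [RHS]addrC -!addrA.
Qed.

Lemma two_exp_neq0 (R : numFieldType) n : (2 : R) ^+ n != 0.
Proof. by rewrite expf_neq0 // pnatr_eq0. Qed.

Section Windows.

Variable m : nat.

(* Window [j] is [B_[j+1, j+m]] in the paper's 1-based notation. *)
Definition matches_at (T : bitseq) (j : nat) (B : bitseq) : bool := take m (drop j B) == T.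

Definition in_window (j i : nat) : bool := (j <= i < j + m)%N.

Definition shift_agree (X Y : bitseq) (d : nat) : bool :=
  take (m - d) (drop d X) == take (m - d) Y.

Lemma matches_atE T j B : size T = m -> (j + m <= size B)%N ->
  matches_at T j B =
  all (fun i => in_window j i ==> (nth false B i == nth false T (i - j))) (iota 0 (size B)).
Proof.
move=> hT hB; apply/eqP/allP.
- move=> <- i; rewrite mem_iota => /andP[_ hi]; apply/implyP => /andP[h1 h2].
  by rewrite nth_take ?nth_drop ?subnKC //; lia.
- move=> H; apply: (@eq_from_nth _ false) => [|t]; rewrite size_takel ?size_drop; try lia.
  move=> ht; rewrite nth_take // nth_drop.
  have /implyP := H (j + t) ltac:(rewrite mem_iota; lia).
  by rewrite addKn => h; apply/eqP/h; rewrite /in_window; lia.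
Qed.

Lemma windows_agreeE X Y M j d : size X = m -> size Y = m -> (j + d + m <= M)%N ->
  all (fun i => in_window j i && in_window (j + d) i ==>
                (nth false X (i - j) == nth false Y (i - (j + d)))) (iota 0 M)
  = shift_agree X Y d.
Proof.
move=> hX hY hM; apply/allP/eqP.
- move=> H; apply: (@eq_from_nth _ false) => [|t]; rewrite ?size_takel ?size_drop; try lia.
  move=> ht; rewrite !nth_take // nth_drop.
  have /implyP := H (j + d + t) ltac:(rewrite mem_iota; lia).
  rewrite /in_window (_ : j + d + t - j = d + t)%N ?addKn; last by lia.
  by move=> h; apply/eqP/h; lia.
- move=> E i _; apply/implyP; rewrite /in_window => /andP[/andP[h1 h2] /andP[h3 h4]].
  have := congr1 (nth false ^~ (i - (j + d))%N) E.
  rewrite !nth_take ?nth_drop; try lia.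
  by move=> <-; apply/eqP; congr nth; lia.
Qed.

Lemma count_outside_windows M j d : (j + d + m <= M)%N ->
  count (fun i => ~~ (in_window j i || in_window (j + d) i)) (iota 0 M)
  = (M - (m + minn d m))%N.
Proof.
move=> hM.
rewrite -[LHS]/(count (predC (predU (in_window j) (in_window (j + d)))) (iota 0 M)).
have := count_predUI (in_window j) (in_window (j + d)) (iota 0 M).
have := count_predC (predU (in_window j) (in_window (j + d))) (iota 0 M).
have -> : count (predI (in_window j) (in_window (j + d))) (iota 0 M)
          = count (fun i => (j + d <= i < j + m)%N) (iota 0 M).
  by apply: eq_count => i /=; rewrite /in_window; apply/idP/idP; lia.
rewrite size_iota /in_window !count_iota_interval /=.
lia.
Qed.

Lemma sum_matches_pair (R : comPzSemiRingType) M X Y j d :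
  size X = m -> size Y = m -> (j + d + m <= M)%N ->
  (\sum_(B : M.-tuple bool) (matches_at X j B && matches_at Y (j + d) B)%:R) * 2 ^+ (m + m)
  = (shift_agree X Y d)%:R * 2 ^+ (m - d) * 2 ^+ M :> R.
Proof.
(* The sum factors over positions: a position outside both windows contributes 2,
   one inside contributes 1 or 0 according as the required bits agree. *)
move=> hX hY hM.
pose fits i b := (in_window j i ==> (b == nth false X (i - j)))
                 && (in_window (j + d) i ==> (b == nth false Y (i - (j + d)))).
have -> : \sum_(B : M.-tuple bool) (matches_at X j B && matches_at Y (j + d) B)%:R
          = \sum_(B : M.-tuple bool) \prod_(0 <= i < M) ((fits i (nth false B i))%:R : R).
  apply: eq_bigr => B _; rewrite !matches_atE ?size_tuple; try lia.
  by rewrite -all_predI prodr_indicator /index_iota subn0.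
rewrite (sum_tuple_prod _ _ (fun i b => (fits i b)%:R)).
under eq_bigr => i _ do rewrite big_bool /fits.
rewrite (eq_bigr (fun i => (in_window j i && in_window (j + d) i ==>
            (nth false X (i - j) == nth false Y (i - (j + d))))%:R
          * if ~~ (in_window j i || in_window (j + d) i) then 2 else 1)); last first.
  move=> i _; case: (in_window j i); case: (in_window (j + d) i);
    case: (nth false X _); case: (nth false Y _) => /=;
    by rewrite ?mul1r ?mulr1 ?addr0 ?add0r.
rewrite big_split /= prodr_indicator prodr_if_count /index_iota subn0.
rewrite windows_agreeE // count_outside_windows // -!mulrA -!exprD.
by congr (_ * 2 ^+ _); lia.
Qed.

Lemma sum_matches (R : numFieldType) M X j : size X = m -> (j + m <= M)%N ->
  \sum_(B : M.-tuple bool) (matches_at X j B)%:R = 2 ^+ M / 2 ^+ m :> R.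
Proof.
move=> hX hM; apply: (mulIf (two_exp_neq0 R (m + m))).
have := sum_matches_pair R M X X j 0 hX hX ltac:(lia).
under eq_bigr => B _ do rewrite addn0 andbb.
rewrite /shift_agree subn0 drop0 eqxx => ->.
by rewrite exprD mul1r; field; rewrite two_exp_neq0.
Qed.

Definition cov_kernel (R : pzRingType) (X Y : bitseq) (d : nat) : R :=
  (shift_agree X Y d)%:R * 2 ^+ (m - d) - 1.

Lemma cov_kernel_eq0 (R : pzRingType) X Y d : (m <= d)%N -> cov_kernel R X Y d = 0.
Proof.
by move=> hd; rewrite /cov_kernel /shift_agree (eqP hd) !take0 eqxx mul1r subrr.
Qed.

Lemma cov_kernel0 (R : pzRingType) X Y : size X = m -> size Y = m -> X != Y ->
  cov_kernel R X Y 0 = -1.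
Proof.
move=> hX hY hXY; rewrite /cov_kernel /shift_agree subn0 drop0 -{1}hX -hY !take_size.
by rewrite (negbTE hXY) mul0r sub0r.
Qed.

Lemma sum_centered_pair (R : numFieldType) M X Y j d :
  size X = m -> size Y = m -> (j + d + m <= M)%N ->
  \sum_(B : M.-tuple bool) ((matches_at X j B)%:R - (2 ^+ m)^-1)
                          * ((matches_at Y (j + d) B)%:R - (2 ^+ m)^-1)
  = 2 ^+ M / 2 ^+ (m + m) * cov_kernel R X Y d.
Proof.
move=> hX hY hM; set p : R := (2 ^+ m)^-1.
have -> : \sum_(B : M.-tuple bool)
            ((matches_at X j B)%:R - p) * ((matches_at Y (j + d) B)%:R - p)
  = \sum_(B : M.-tuple bool) (matches_at X j B && matches_at Y (j + d) B)%:R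
    - p * \sum_(B : M.-tuple bool) (matches_at X j B)%:R
    - p * \sum_(B : M.-tuple bool) (matches_at Y (j + d) B)%:R
    + p ^+ 2 * \sum_(B : M.-tuple bool) 1.
  rewrite !mulr_sumr -!sumrB -big_split /=; apply: eq_bigr => B _.
  by rewrite -mulnb natrM; ring.
have -> : \sum_(B : M.-tuple bool) (matches_at X j B && matches_at Y (j + d) B)%:R
          = (shift_agree X Y d)%:R * 2 ^+ (m - d) * 2 ^+ M / 2 ^+ (m + m) :> R.
  by rewrite -(sum_matches_pair _ _ _ _ j) // mulfK // two_exp_neq0.
rewrite !sum_matches //; last by lia.
rewrite sumr_const card_tuple card_bool natrX /cov_kernel /p exprD.
by field; rewrite two_exp_neq0.
Qed.

End Windows.

Lemma occE M m T (B : M.-tuple bool) :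
  occ m T B = count (fun j => matches_at m T j B) (iota 0 (M - m + 1)).
Proof.
rewrite /occ -[iota 1 _]/(iota (1 + 0) _) iotaDl count_map; apply: eq_count => j /=.
by rewrite /substr /matches_at add1n (_ : ((1 + j + m - 1).+1 - j.+1 = m)%N) //; lia.
Qed.

Lemma centered_occE (R : numFieldType) M m T (B : M.-tuple bool) :
  (occ m T B)%:R - muNTM R M m
  = \sum_(0 <= j < M - m + 1) ((matches_at m T j B)%:R - (2 ^+ m)^-1).
Proof.
rewrite occE -sum1_count natr_sum big_mkcond sumrB sumr_const_nat /index_iota !subn0.
rewrite /muNTM mulr_natl.
by congr (_ - _); apply: eq_bigr => j _; case: (matches_at _ _ _ _).
Qed.

Lemma sum_centered_occ_pair (R : numFieldType) M m T1 T2 :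
  size T1 = m -> size T2 = m -> (m <= M)%N -> (m <= M - m + 1)%N ->
  \sum_(B : M.-tuple bool) ((occ m T1 B)%:R - muNTM R M m) * ((occ m T2 B)%:R - muNTM R M m)
  = 2 ^+ M / 2 ^+ (m + m)
    * (cov_kernel m R T1 T2 0 *+ (M - m + 1)
       + \sum_(1 <= d < m)
           (cov_kernel m R T1 T2 d + cov_kernel m R T2 T1 d) *+ (M - m + 1 - d)).
Proof.
move=> h1 h2 hM hN; set N := (M - m + 1)%N.
under eq_bigr => B _ do rewrite !centered_occE big_distrlr /=.
rewrite exchange_big /=; under eq_bigr => j _ do rewrite exchange_big /=.
rewrite (eq_big_nat _ _ (F2 := fun j => \sum_(0 <= k < N) 2 ^+ M / 2 ^+ (m + m)
   * (if (j <= k)%N then cov_kernel m R T1 T2 (k - j) else cov_kernel m R T2 T1 (j - k))));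
  last first.
  move=> j /andP[_ hj]; apply: eq_big_nat => k /andP[_ hk].
  case: leqP => hjk.
  - by rewrite -(sum_centered_pair m R M T1 T2 j (k - j)) ?subnKC //; lia.
  - under eq_bigr => B _ do rewrite mulrC.
    by rewrite -(sum_centered_pair m R M T2 T1 k (j - k)) ?subnKC //; lia.
under eq_bigr => j _ do rewrite -mulr_sumr.
rewrite -mulr_sumr sum_toeplitz (big_nat_widen _ _ _ _ _ hN) [in RHS]big_mkcond /=.
congr (_ * (_ + _)); apply: eq_big_nat => d _; case: ltnP => // hd.
by rewrite !cov_kernel_eq0 // addr0 mul0rn.
Qed.

Lemma ecoef_cov_kernel (R : pzRingType) m T1 T2 k : (1 <= k < m)%N ->
  2 ^+ (m - k) * ((ecoef m T1 T2 (Posz k))%:R + (ecoef m T1 T2 (- Posz k))%:R)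
  = cov_kernel m R T2 T1 k + cov_kernel m R T1 T2 k + 2 :> R.
Proof.
case: k => [|k] hk; first by lia.
rewrite (_ : - Posz k.+1 = Negz k) // /ecoef /cov_kernel /shift_agree /substr /=.
rewrite !drop0 !subSS subn0.
rewrite (_ : (k.+1 <= m.-1)%N = true) /=; last by lia.
rewrite eq_sym mulrDr !mulr_natr !mulr_natl [X in _ = X + _]addrACA.
by rewrite -addrA -opprD -addrA subrK.
Qed.

Lemma ecoef_sumE (R : comPzRingType) m T1 T2 : (0 < m)%N ->
  size T1 = m -> size T2 = m -> T1 != T2 ->
  - (2 * m)%:R + 1 + \sum_(1 <= k < m) 2 ^+ (m - k)
      * ((ecoef m T1 T2 (Posz k))%:R + (ecoef m T1 T2 (- Posz k))%:R)
  = cov_kernel m R T1 T2 0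
    + \sum_(1 <= d < m) (cov_kernel m R T1 T2 d + cov_kernel m R T2 T1 d) :> R.
Proof.
move=> hm h1 h2 hT12.
rewrite (eq_big_nat _ _ (fun k hk => ecoef_cov_kernel R m T1 T2 k hk)).
rewrite big_split sumr_const_nat cov_kernel0 //=.
under eq_bigr => d _ do rewrite addrC.
by rewrite -[2 *+ _]mulr_natr natrB // natrM; ring.
Qed.

Lemma sigma2NTME (R : numFieldType) M m : (0 < m)%N ->
  sigma2NTM R M m = M%:R * (2 ^+ m - (2 * m)%:R + 1) / 2 ^+ (m + m).
Proof.
move=> hm; rewrite /sigma2NTM natrB ?muln_gt0 // mul2n -addnn exprD.
by field; rewrite two_exp_neq0.
Qed.

Lemma exp2_sub_double_gt0 (R : realDomainType) m : 0 < 2 ^+ m - (2 * m)%:R + 1 :> R.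
Proof.
have le_2m_exp : (2 * m <= 2 ^ m)%N.
  by case: m => [|m] //; rewrite expnS; have := @ltn_expl 2 m isT; lia.
have : (2 * m)%:R <= 2 ^+ m :> R by rewrite -natrX ler_nat.
lra.
Qed.

Lemma unifE_normalized_occ_product (R : rcfType) M m T1 T2 :
  (0 < m)%N -> size T1 = m -> size T2 = m -> (m <= M)%N -> (m <= M - m + 1)%N ->
  unifE (fun B : M.-tuple bool =>
           ((occ m T1 B)%:R - muNTM R M m) / Num.sqrt (sigma2NTM R M m)
           * (((occ m T2 B)%:R - muNTM R M m) / Num.sqrt (sigma2NTM R M m)))
  = (cov_kernel m R T1 T2 0 *+ (M - m + 1)
     + \sum_(1 <= d < m) (cov_kernel m R T1 T2 d + cov_kernel m R T2 T1 d) *+ (M - m + 1 - d))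
    / (M%:R * (2 ^+ m - (2 * m)%:R + 1)).
Proof.
move=> hm h1 h2 hM hN.
have D_gt0 := exp2_sub_double_gt0 R m.
have M_neq0 : M%:R != 0 :> R by rewrite pnatr_eq0 -lt0n; lia.
rewrite /unifE /=; under eq_bigr => B _ do rewrite mulrACA -invfM -expr2.
rewrite -mulr_suml sum_centered_occ_pair // sigma2NTME // sqr_sqrtr; last first.
  by rewrite divr_ge0 ?exprn_ge0 // mulr_ge0 // ltW.
by field; rewrite M_neq0 !two_exp_neq0 -natrM gt_eqF.
Qed.

Theorem mainTheorem1 (R : rcfType) (m : nat) (T1 T2 : bitseq) :
  (2 <= m)%N -> size T1 = m -> size T2 = m -> T1 != T2 ->
  non_self_overlapping m T1 -> non_self_overlapping m T2 ->
  exists (C : R) (M0 : nat), forall M : nat, (m <= M)%N -> (M0 <= M)%N ->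
    let mu : R := muNTM R M m in
    let sigma : R := Num.sqrt (sigma2NTM R M m) in
    `| unifE (fun B : M.-tuple bool =>
           ((occ m T1 B)%:R - mu) / sigma * (((occ m T2 B)%:R - mu) / sigma))
       - ((- (2 * m)%:R + 1
           + \sum_(1 <= k < m)
               (2 ^+ (m - k) * ((ecoef m T1 T2 (Posz k))%:R
                                + (ecoef m T1 T2 (- Posz k))%:R)))
          / (2 ^+ m - (2 * m)%:R + 1)) |
    <= C / M%:R.
Proof.
(* Non-self-overlap only matters for the variance, which is prescribed here. *)
move=> hm h1 h2 hT12 _ _.
set D : R := 2 ^+ m - (2 * m)%:R + 1.
pose kappa d : R := cov_kernel m R T1 T2 d + cov_kernel m R T2 T1 d.
set A : R := cov_kernel m R T1 T2 0 + \sum_(1 <= d < m) kappa d.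
set Bc : R := \sum_(1 <= d < m) d%:R * kappa d.
exists (`|(1 - m%:R) * A - Bc| / D), (2 * m)%N => M hmM h2mM /=.
rewrite ecoef_sumE ?unifE_normalized_occ_product -/D -/A //; [|lia..].
have weightsE : \sum_(1 <= d < m) kappa d *+ (M - m + 1 - d)
                 = (M - m + 1)%:R * (A - cov_kernel m R T1 T2 0) - Bc.
  rewrite /A (addrC (cov_kernel m R T1 T2 0)) addrK mulr_sumr -sumrB.
  apply: eq_big_nat => d /andP[_ hd].
  by rewrite -[_ *+ (_ - d)]mulr_natl natrB ?mulrBl //; lia.
have D_gt0 : 0 < D := exp2_sub_double_gt0 R m.
have M_gt0 : 0 < M%:R :> R by rewrite ltr0n; lia.
rewrite weightsE -[cov_kernel m R T1 T2 0 *+ _]mulr_natl natrD natrB //.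
have -> : ((M%:R - m%:R + 1) * cov_kernel m R T1 T2 0
           + ((M%:R - m%:R + 1) * (A - cov_kernel m R T1 T2 0) - Bc)) / (M%:R * D) - A / D
          = ((1 - m%:R) * A - Bc) / (M%:R * D).
  by field; rewrite !gt_eqF.
by rewrite normrM normfV (gtr0_norm (mulr_gt0 M_gt0 D_gt0)) invfM mulrA mulrAC.
Qed.
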